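(* Let $c\ge3$ be an integer and $K(t,t')=\frac{2c}{c+1}\cdot\frac{t'^{2/(c-1)}}{\sum_{i=1}^{t} i^{2/(c-1)}}\cdot\mathbf{1}[t\ge t']$ for positive integers $t,t'$. Then for all positive integers $t''<t$, $$\sum_{q=t''}^{t-1}K(q,t'')\ge c\left(1-\left(\frac{t''}{t}\right)^{2/(c-1)}\right).$$ *)

From Stdlib Require Import Reals Lra Lia List.
Open Scope R_scope.

Definition expo (c : nat) : R := 2 / (INR c - 1).

(* sum_{q=m}^{n-1} f q  (empty if n <= m) *)
Definition sum_range (m n : nat) (f : nat -> R) : R :=
  fold_right Rplus 0 (map f (seq m (n - m))).

Definition K (c t t' : nat) : R :=
  if Nat.leb t' t then
    (2 * INR c / (INR c + 1)) *
    (Rpower (INR t') (expo c) / sum_range 1 (t + 1) (fun i => Rpower (INR i) (expo c)))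
  else 0.

From Stdlib Require Import Reals Lra Lia List.
From Coquelicot Require Import Coquelicot.
Open Scope R_scope.

(* Put a = 2/(c-1), so 0 < a <= 1, P q = q^a and S q = sum_{i=1}^q i^a.  Then
   K(q,t'') = C * P t'' / S q with C = 2c/(c+1), and C * (a+1)/a = c.
   The heart of the matter is the upper bound on power sums
       S q <= a/(a+1) * P q * P (q+1) / (P (q+1) - P q)        (q >= 1),
   i.e. 1/S q >= (a+1)/a * (1/P q - 1/P (q+1)); summed over t'' <= q < t it
   telescopes to c * (1 - P t''/P t) = c * (1 - (t''/t)^a).
   The power-sum bound is proved by induction on q.  With the ratio
   rho x = x^a / ((x+1)^a - x^a), the induction needs rho 1 >= 1/a (that is
   2^a <= 1 + a) and rho (x+1) >= rho x + 1/a.  The latter holds because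
   rho x - x/a = delta (ln (1 + 1/x)) where
       delta v = 1/(e^(a v) - 1) - 1/(a (e^v - 1))
   is nonincreasing on (0,oo), a consequence of sinh (a v) <= a sinh v. *)

Lemma nondecreasing_of_derive (f df : R -> R) (lo : R) :
  (forall x, lo <= x -> is_derive f x (df x)) ->
  (forall x, lo <= x -> 0 <= df x) ->
  forall x y, lo <= x -> x <= y -> f x <= f y.
Proof.
  intros Hderiv Hpos x y Hx Hxy.
  destruct (MVT_gen f x y df) as [z [Hz Hmvt]];
    rewrite ?Rmin_left, ?Rmax_right in * by lra.
  - intros z Hz. apply Hderiv. lra.
  - intros z Hz. apply derivable_continuous_pt.
    exists (df z). apply is_derive_Reals, Hderiv. lra.
  - assert (0 <= df z) by (apply Hpos; lra). nra.
Qed.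

Lemma exp_le_mono (x y : R) : x <= y -> exp x <= exp y.
Proof. intros [Hlt | ->]; [left; now apply exp_increasing | lra]. Qed.

Lemma one_lt_exp (y : R) : 0 < y -> 1 < exp y.
Proof. intros Hy. pose proof (exp_ineq1_le y). lra. Qed.

(* Concavity of y |-> e^(a y) relative to the chord: the source of the base
   case 2^a <= 1 + a. *)
Lemma exp_scale_le (a y : R) : 0 < a <= 1 -> 0 <= y ->
  exp (a * y) <= 1 + a * (exp y - 1).
Proof.
  intros Ha Hy.
  set (g := fun y => 1 + a * (exp y - 1) - exp (a * y)).
  assert (Hg : g 0 <= g y).
  { apply (nondecreasing_of_derive g (fun y => a * exp y - a * exp (a * y)) 0);
      try lra.
    - intros z _. unfold g. auto_derive; [easy | ring].
    - intros z Hz.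
      assert (exp (a * z) <= exp z) by (apply exp_le_mono; nra). nra. }
  unfold g in Hg. rewrite Rmult_0_r, exp_0 in Hg. lra.
Qed.

Lemma cosh_le (x y : R) : 0 <= x -> x <= y -> cosh x <= cosh y.
Proof.
  apply (nondecreasing_of_derive cosh sinh 0).
  - intros z _. apply is_derive_Reals, derivable_pt_lim_cosh.
  - intros z [Hz | <-]; [left; rewrite <- sinh_0; now apply sinh_lt |].
    rewrite sinh_0. lra.
Qed.

(* Convexity of sinh on [0, oo): sinh (a v) <= a sinh v for 0 < a <= 1. *)
Lemma sinh_scale_le (a v : R) : 0 < a <= 1 -> 0 <= v ->
  sinh (a * v) <= a * sinh v.
Proof.
  intros Ha Hv.
  set (g := fun v => a * sinh v - sinh (a * v)).
  assert (Hg : g 0 <= g v).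
  { apply (nondecreasing_of_derive g (fun v => a * cosh v - a * cosh (a * v)) 0);
      try lra.
    - intros z _. unfold g, sinh, cosh. auto_derive; [easy | field].
    - intros z Hz. assert (cosh (a * z) <= cosh z) by (apply cosh_le; nra). nra. }
  unfold g in Hg. rewrite Rmult_0_r, sinh_0 in Hg. lra.
Qed.

(* e^y / (e^y - 1)^2 = 1 / (2 sinh (y/2))^2: rewrites the derivative of
   1/(e^y - 1) in terms of sinh. *)
Lemma exp_over_sqr_pred (y : R) : 0 < y ->
  exp y / (exp y - 1) ^ 2 = / (2 * sinh (y / 2)) ^ 2.
Proof.
  intros Hy.
  assert (Hhalf : exp y = exp (y / 2) * exp (y / 2))
    by (rewrite <- exp_plus; f_equal; field).
  assert (Hpos : 1 < exp (y / 2))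
    by (apply one_lt_exp; lra).
  unfold sinh. rewrite exp_Ropp, Hhalf. field.
  split; [lra |]. intro Hz. nra.
Qed.

(* The defect of the ratio rho from the linear function x/a, expressed in
   the variable v = ln (1 + 1/x). *)
Definition delta (a v : R) : R := / (exp (a * v) - 1) - / (a * (exp v - 1)).

(* delta is nonincreasing on (0, oo): the derivative of - delta is
   a/(2 sinh (a v/2))^2 - 1/(a (2 sinh (v/2))^2), which is nonnegative since
   sinh (a v/2) <= a sinh (v/2). *)
Lemma delta_nonincreasing (a u w : R) : 0 < a <= 1 -> 0 < u -> u <= w ->
  delta a w <= delta a u.
Proof.
  intros Ha Hu Huw.
  set (d := fun v => a * exp (a * v) / (exp (a * v) - 1) ^ 2
                     - exp v / (a * (exp v - 1) ^ 2)).
  enough (- delta a u <= - delta a w) by lra.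
  apply (nondecreasing_of_derive (fun v => - delta a v) d u); try lra.
  - intros v Hv.
    assert (1 < exp (a * v)) by (apply one_lt_exp; nra).
    assert (1 < exp v) by (apply one_lt_exp; lra).
    unfold delta, d. auto_derive.
    + repeat split; try lra. intro. nra.
    + field. lra.
  - intros v Hv. unfold d.
    assert (1 < exp v) by (apply one_lt_exp; lra).
    replace (a * exp (a * v) / (exp (a * v) - 1) ^ 2)
      with (a * (exp (a * v) / (exp (a * v) - 1) ^ 2)) by (unfold Rdiv; ring).
    replace (exp v / (a * (exp v - 1) ^ 2))
      with (/ a * (exp v / (exp v - 1) ^ 2)) by (field; lra).
    rewrite !exp_over_sqr_pred by nra.
    replace (a * v / 2) with (a * (v / 2)) by field.
    assert (Hle : sinh (a * (v / 2)) <= a * sinh (v / 2))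
      by (apply sinh_scale_le; lra).
    assert (Hpos : 0 < sinh (a * (v / 2)))
      by (rewrite <- sinh_0; apply sinh_lt; nra).
    assert (0 < sinh (v / 2)) by (rewrite <- sinh_0; apply sinh_lt; lra).
    set (s1 := sinh (a * (v / 2))) in *. set (s2 := sinh (v / 2)) in *.
    replace (a * / (2 * s1) ^ 2 - / a * / (2 * s2) ^ 2)
      with (((a * s2) ^ 2 - s1 ^ 2) / (4 * a * s1 ^ 2 * s2 ^ 2))
      by (field; repeat split; lra).
    apply Rdiv_le_0_compat; [nra |].
    assert (0 < s1 ^ 2) by (apply pow_lt; lra).
    assert (0 < s2 ^ 2) by (apply pow_lt; lra).
    apply Rmult_lt_0_compat; [apply Rmult_lt_0_compat |]; lra.
Qed.

Definition power_ratio (a x : R) : R :=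
  Rpower x a / (Rpower (x + 1) a - Rpower x a).

(* Stdlib's Rpower x a = exp (a ln x) is positive for every x. *)
Lemma Rpower_pos (x a : R) : 0 < Rpower x a.
Proof. apply exp_pos. Qed.

Lemma Rpower_1_l (a : R) : Rpower 1 a = 1.
Proof. unfold Rpower. now rewrite ln_1, Rmult_0_r, exp_0. Qed.

(* rho x - x/a = delta (ln (1 + 1/x)), from (x+1)^a = x^a (1 + 1/x)^a. *)
Lemma power_ratio_delta (a x : R) : 0 < a -> 0 < x ->
  power_ratio a x - x / a = delta a (ln (1 + / x)).
Proof.
  intros Ha Hx.
  assert (Hinv : 0 < / x) by (apply Rinv_0_lt_compat; lra).
  assert (Hsplit : Rpower (x + 1) a = Rpower x a * exp (a * ln (1 + / x))).
  { replace (x + 1) with (x * (1 + / x)) by (field; lra).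
    rewrite <- Rpower_mult_distr by lra. reflexivity. }
  assert (Hln : 0 < ln (1 + / x)) by (rewrite <- ln_1; apply ln_increasing; lra).
  assert (1 < exp (a * ln (1 + / x))) by (apply one_lt_exp; nra).
  pose proof (Rpower_pos x a).
  unfold power_ratio, delta. rewrite Hsplit, exp_ln by lra.
  field. repeat split; try lra. intro. nra.
Qed.

Lemma power_ratio_step (a x : R) : 0 < a <= 1 -> 0 < x ->
  power_ratio a x + / a <= power_ratio a (x + 1).
Proof.
  intros Ha Hx.
  pose proof (power_ratio_delta a x ltac:(lra) Hx) as Dx.
  pose proof (power_ratio_delta a (x + 1) ltac:(lra) ltac:(lra)) as Dx1.
  assert (Hinv : / (x + 1) < / x) by (apply Rinv_lt_contravar; nra).
  assert (0 < / (x + 1)) by (apply Rinv_0_lt_compat; lra).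
  assert (Hmono : delta a (ln (1 + / x)) <= delta a (ln (1 + / (x + 1)))).
  { apply delta_nonincreasing; [lra | |].
    - rewrite <- ln_1. apply ln_increasing; lra.
    - left. apply ln_increasing; lra. }
  replace ((x + 1) / a) with (x / a + / a) in Dx1 by (field; lra).
  lra.
Qed.

Lemma power_ratio_one (a : R) : 0 < a <= 1 -> / a <= power_ratio a 1.
Proof.
  intros Ha.
  assert (Hln2 : 0 < ln (1 + 1)) by (rewrite <- ln_1; apply ln_increasing; lra).
  assert (Hup : Rpower (1 + 1) a <= 1 + a).
  { unfold Rpower. pose proof (exp_scale_le a (ln (1 + 1)) Ha ltac:(lra)) as H.
    rewrite exp_ln in H by lra. lra. }
  assert (Hlow : 1 < Rpower (1 + 1) a).
  { unfold Rpower. apply one_lt_exp. nra. }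
  unfold power_ratio. rewrite Rpower_1_l.
  unfold Rdiv. rewrite Rmult_1_l. apply Rinv_le_contravar; lra.
Qed.

Lemma power_ratio_shift (a x : R) : 0 < a -> 0 < x ->
  Rpower (x + 1) a * power_ratio a x = Rpower x a * (1 + power_ratio a x).
Proof.
  intros Ha Hx.
  assert (Rpower x a < Rpower (x + 1) a) by (apply Rlt_Rpower_l; lra).
  unfold power_ratio. field. lra.
Qed.

Lemma fold_right_Rplus_init (x : R) (l : list R) :
  fold_right Rplus x l = fold_right Rplus 0 l + x.
Proof. induction l as [| y l IH]; simpl; [| rewrite IH]; lra. Qed.

Lemma sum_range_empty (m : nat) (f : nat -> R) : sum_range m m f = 0.
Proof. unfold sum_range. now rewrite Nat.sub_diag. Qed.

Lemma sum_range_snoc (m n : nat) (f : nat -> R) : (m <= n)%nat ->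
  sum_range m (S n) f = sum_range m n f + f n.
Proof.
  intros Hmn. unfold sum_range.
  replace (S n - m)%nat with (S (n - m)) by lia.
  rewrite seq_S, map_app, fold_right_app, fold_right_Rplus_init. simpl.
  replace (m + (n - m))%nat with n by lia. lra.
Qed.

Lemma sum_range_telescope (g u : nat -> R) (m n : nat) : (m <= n)%nat ->
  (forall q, (m <= q < n)%nat -> u q - u (S q) <= g q) ->
  u m - u n <= sum_range m n g.
Proof.
  induction 1 as [| n Hmn IH]; intros Hg.
  - rewrite sum_range_empty. lra.
  - rewrite sum_range_snoc by lia.
    assert (u m - u n <= sum_range m n g) by (apply IH; intros q Hq; apply Hg; lia).
    assert (u n - u (S n) <= g n) by (apply Hg; lia).
    lra.
Qed.

Definition power_sum (a : R) (n : nat) : R :=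
  sum_range 1 (n + 1) (fun i => Rpower (INR i) a).

Lemma power_sum_one (a : R) : power_sum a 1 = 1.
Proof. unfold power_sum, sum_range. simpl. rewrite Rpower_1_l. lra. Qed.

Lemma power_sum_succ (a : R) (n : nat) :
  power_sum a (S n) = power_sum a n + Rpower (INR n + 1) a.
Proof.
  unfold power_sum. replace (S n + 1)%nat with (S (n + 1)) by lia.
  rewrite sum_range_snoc, plus_INR by lia. reflexivity.
Qed.

Section PowerSumBound.

Variable a : R.
Hypothesis Ha : 0 < a <= 1.

Lemma power_sum_pos (n : nat) : (1 <= n)%nat -> 0 < power_sum a n.
Proof.
  induction 1 as [| n Hn IH].
  - rewrite power_sum_one. lra.
  - rewrite power_sum_succ. pose proof (Rpower_pos (INR n + 1) a). lra.
Qed.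

(* The main estimate: S n <= a/(a+1) * (n+1)^a * rho n, by induction on n;
   the step combines S (n+1) = S n + (n+1)^a with rho (n+1) >= rho n + 1/a. *)
Lemma power_sum_bound (n : nat) : (1 <= n)%nat ->
  power_sum a n <= a / (a + 1) * Rpower (INR n + 1) a * power_ratio a (INR n).
Proof.
  assert (Hk : a / (a + 1) * (1 + / a) = 1) by (field; lra).
  assert (Hk0 : 0 < a / (a + 1)) by (apply Rdiv_lt_0_compat; lra).
  induction 1 as [| n Hn IH].
  - rewrite power_sum_one. simpl INR.
    rewrite Rmult_assoc, power_ratio_shift, Rpower_1_l by lra.
    pose proof (power_ratio_one a Ha). nra.
  - assert (Hx : 0 < INR n) by (apply lt_0_INR; lia).
    rewrite power_sum_succ, S_INR, Rmult_assoc, power_ratio_shift by lra.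
    pose proof (power_ratio_step a (INR n) Ha Hx) as Hstep.
    pose proof (Rpower_pos (INR n + 1) a) as Hp.
    set (p := Rpower (INR n + 1) a) in *.
    set (r := power_ratio a (INR n)) in *.
    set (r' := power_ratio a (INR n + 1)) in *.
    assert (Hgain : 0 <= a / (a + 1) * p * (r' - r - / a))
      by (apply Rmult_le_pos; [apply Rmult_le_pos |]; lra).
    replace (a / (a + 1) * (p * (1 + r'))) with
      (a / (a + 1) * p * r + p * (a / (a + 1) * (1 + / a))
       + a / (a + 1) * p * (r' - r - / a)) by ring.
    rewrite Hk. lra.
Qed.

(* Reciprocal form of the estimate, whose left side telescopes in n. *)
Lemma power_sum_recip (n : nat) : (1 <= n)%nat ->
  (a + 1) / a * (/ Rpower (INR n) a - / Rpower (INR n + 1) a)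
    <= / power_sum a n.
Proof.
  intros Hn.
  assert (Hx : 0 < INR n) by (apply lt_0_INR; lia).
  assert (Hlt : Rpower (INR n) a < Rpower (INR n + 1) a)
    by (apply Rlt_Rpower_l; lra).
  pose proof (Rpower_pos (INR n) a).
  pose proof (power_sum_pos n Hn).
  pose proof (power_sum_bound n Hn) as Hbound.
  unfold power_ratio in Hbound.
  replace ((a + 1) / a * (/ Rpower (INR n) a - / Rpower (INR n + 1) a)) with
    (/ (a / (a + 1) * Rpower (INR n + 1) a *
        (Rpower (INR n) a / (Rpower (INR n + 1) a - Rpower (INR n) a))))
    by (field; repeat split; lra).
  apply Rinv_le_contravar; lra.
Qed.

End PowerSumBound.

Lemma Rpower_div (x y a : R) : 0 < x -> 0 < y ->
  Rpower (x / y) a = Rpower x a / Rpower y a.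
Proof.
  intros Hx Hy.
  assert (H : Rpower (x / y) a * Rpower y a = Rpower x a).
  { rewrite Rpower_mult_distr by (try apply Rdiv_lt_0_compat; lra).
    f_equal. field. lra. }
  pose proof (Rpower_pos y a). rewrite <- H. field. lra.
Qed.

Lemma expo_range (c : nat) : (3 <= c)%nat -> 0 < expo c <= 1.
Proof.
  intros hc.
  assert (Hc : 3 <= INR c)
    by (replace 3 with (INR 3) by (simpl; lra); now apply le_INR).
  unfold expo. split; [apply Rdiv_lt_0_compat; lra |].
  apply Rmult_le_reg_r with (INR c - 1); [lra |]. field_simplify; lra.
Qed.

(* Each kernel value dominates one increment of q |-> c (t''/q)^a; the
   normalisation 2c/(c+1) of K is exactly what turns (a+1)/a into c. *)
Lemma kernel_ge_increment (c t'' q : nat) : (3 <= c)%nat -> (1 <= t'')%nat ->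
  (t'' <= q)%nat ->
  INR c * Rpower (INR t'') (expo c) *
    (/ Rpower (INR q) (expo c) - / Rpower (INR q + 1) (expo c)) <= K c q t''.
Proof.
  intros hc ht'' hq.
  pose proof (expo_range c hc) as Ha.
  assert (Hc : 3 <= INR c)
    by (replace 3 with (INR 3) by (simpl; lra); now apply le_INR).
  set (a := expo c) in *.
  set (C := 2 * INR c / (INR c + 1)).
  assert (HC : C * ((a + 1) / a) = INR c) by (unfold C, a, expo; field; lra).
  unfold K. rewrite (proj2 (Nat.leb_le t'' q)) by exact hq.
  change (sum_range 1 (q + 1) _) with (power_sum a q). fold a C.
  rewrite <- HC.
  replace (C * (Rpower (INR t'') a / power_sum a q))
    with (C * Rpower (INR t'') a * / power_sum a q) by (unfold Rdiv; ring).
  replace (C * ((a + 1) / a) * Rpower (INR t'') a *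
           (/ Rpower (INR q) a - / Rpower (INR q + 1) a))
    with (C * Rpower (INR t'') a *
          ((a + 1) / a * (/ Rpower (INR q) a - / Rpower (INR q + 1) a)))
    by ring.
  apply Rmult_le_compat_l; [| apply power_sum_recip; [exact Ha | lia]].
  pose proof (Rpower_pos (INR t'') a).
  apply Rmult_le_pos; [unfold C; apply Rdiv_le_0_compat |]; lra.
Qed.

Theorem mainTheorem9 (c t t'' : nat) (hc : (3 <= c)%nat)
  (ht'' : (1 <= t'')%nat) (hlt : (t'' < t)%nat) :
  sum_range t'' t (fun q => K c q t'') >=
  INR c * (1 - Rpower (INR t'' / INR t) (expo c)).
Proof.
  set (a := expo c).
  (* u q = c (t''/q)^a; the kernel dominates its increments, so the sum
     telescopes to at least u t'' - u t = c (1 - (t''/t)^a). *)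
  set (u := fun q => INR c * Rpower (INR t'') a / Rpower (INR q) a).
  assert (Hterm : forall q, (t'' <= q < t)%nat -> u q - u (S q) <= K c q t'').
  { intros q Hq. eapply Rle_trans; [| apply kernel_ge_increment; lia].
    right. unfold u. fold a. rewrite S_INR. unfold Rdiv. ring. }
  pose proof (sum_range_telescope _ u t'' t ltac:(lia) Hterm) as Htele.
  assert (Ht'' : 0 < INR t'') by (apply lt_0_INR; lia).
  assert (Ht : 0 < INR t) by (apply lt_0_INR; lia).
  pose proof (Rpower_pos (INR t'') a). pose proof (Rpower_pos (INR t) a).
  rewrite Rpower_div by lra.
  apply Rle_ge. eapply Rle_trans; [right | exact Htele].
  unfold u. field. lra.
Qed.
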